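(* Let $K\ge 3$, $\alpha\in[2:K-1]$, $F\in\mathbb{Z}^+$, and consider the symmetric $(K,\alpha,F)$ FDS structure with $N=F\binom{K}{\alpha}\ge K$. For $t\in[0:K]$ let $R_{\mathrm{MAN}}(t)=\frac{K-t}{t+1}$ denote the load of the Maddah-Ali–Niesen scheme at cache size $M=tN/K$, and write $R^\star_{\mathrm{u},\mathrm{s}}(t)$ for $R^\star_{\mathrm{u},\mathrm{s}}(tN/K)$. Then $$\frac{R^\star_{\mathrm{u},\mathrm{s}}(t)}{R_{\mathrm{MAN}}(t)}\ge 1\quad\text{for all } t\in[0:\alpha-1],\qquad \frac{R^\star_{\mathrm{u},\mathrm{s}}(t)}{R_{\mathrm{MAN}}(t)}> 1\quad\text{for all } t\in\{1,\dots,\alpha-2\}.$$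
   Context: Notation: $[n]=\{1,\dots,n\}$, $[a:b]=\{a,\dots,b\}$. Symmetric $(K,\alpha,F)$ FDS structure: the library consists of $N=F\binom{K}{\alpha}$ distinct files $W_{f,\mathcal S}$, indexed by $f\in[F]$ and $\mathcal S\subseteq[K]$ with $|\mathcal S|=\alpha$; the file class $\mathcal W_{\mathcal S}=\{W_{f,\mathcal S}:f\in[F]\}$ is of interest exactly to the users in $\mathcal S$. The file demand set (FDS) of user $k\in[K]$ is $\mathcal F_k=\{W_{f,\mathcal S}: f\in[F],\ |\mathcal S|=\alpha,\ k\in\mathcal S\}$. Caching model (centralized): a server stores the $N$ files, each consisting of $B$ independent uniformly random bits, and is connected to $K$ users by an error-free shared broadcast link; each user has a cache of $MB$ bits. In the placement phase the server fills the caches without knowing the future demands. In the delivery phase each user $k$ requests one file in $\mathcal F_k$; the server then broadcasts a message from which each user must decode its requested file using its cache contents. A pair $(M,R)$ is achievable if there is a scheme such that for every admissible demand at most $RB$ bits are transmitted; the optimal worst-case load is the infimum of achievable $R$. Uncoded and selfish placement: caches contain plain copies of bits of files, and user $k$ may cache bits of $W_{f,\mathcal S}$ only if $k\in\mathcal S$. $R^\star_{\mathrm{u},\mathrm{s}}(M)$ is the optimal worst-case load when the placement is restricted to be uncoded and selfish. *)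

From HB Require Import structures.
From mathcomp Require Import all_boot all_order all_algebra.
From mathcomp Require Import boolp classical_sets reals.

Set Implicit Arguments.
Unset Strict Implicit.
Unset Printing Implicit Defensive.

Import Order.TTheory GRing.Theory Num.Theory.
Local Open Scope ring_scope.

(* File indices W_{f,S} of the symmetric (K,alpha,F) FDS structure:
   f in [F] (as 'I_F), S a subset of the K users ('I_K) with |S| = alpha. *)
Definition fileT (K alpha F : nat) : finType :=
  {p : 'I_F * {set 'I_K} | #|p.2| == alpha}.

Definition fileSet K alpha F (w : fileT K alpha F) : {set 'I_K} := (val w).2.

Definition bitT K alpha F (B : nat) : finType := (fileT K alpha F * 'I_B)%type.

Definition libT K alpha F B := {ffun bitT K alpha F B -> bool}.

Definition cacheof K alpha F B (Z : {set bitT K alpha F B})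
  (W : libT K alpha F B) : {ffun bitT K alpha F B -> option bool} :=
  [ffun x => if x \in Z then Some (W x) else None].

Definition fileof K alpha F B (W : libT K alpha F B) (w : fileT K alpha F)
  : {ffun 'I_B -> bool} := [ffun i => W (w, i)].

Definition admissible K alpha F (d : {ffun 'I_K -> fileT K alpha F}) : Prop :=
  forall k, k \in fileSet (d k).

(* (M,R) achievable with uncoded and selfish placement (zero-error,
   for every realization of the library, for some file length B >= 1). *)
Definition achievable_us (R : realType) (K alpha F : nat) (M Rl : R) : Prop :=
  exists B : nat, (0 < B)%N /\
  exists Z : 'I_K -> {set bitT K alpha F B},
    (forall k, (#|Z k|%:R <= M * B%:R)) /\
    (forall k x, x \in Z k -> k \in fileSet x.1) /\
    forall d : {ffun 'I_K -> fileT K alpha F}, admissible d ->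
      exists L : nat, L%:R <= Rl * B%:R /\
      exists enc : libT K alpha F B -> L.-tuple bool,
        forall k : 'I_K,
        exists dec : L.-tuple bool -> {ffun bitT K alpha F B -> option bool} ->
                     {ffun 'I_B -> bool},
          forall W : libT K alpha F B,
            dec (enc W) (cacheof (Z k) W) = fileof W (d k).

Definition Rstar_us (R : realType) (K alpha F : nat) (M : R) : R :=
  inf (fun Rl : R => achievable_us K alpha F M Rl).

Definition Nfiles (K alpha F : nat) : nat := (F * 'C(K, alpha))%N.

Definition Rstar_t (R : realType) (K alpha F t : nat) : R :=
  Rstar_us K alpha F ((t%:R * (Nfiles K alpha F)%:R) / K%:R).

Definition R_MAN (R : realType) (K t : nat) : R := (K%:R - t%:R) / (t%:R + 1).

(* Fix an ordering pi of the users and a file index f, and let user pi p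
   demand the file of class pi(window p), window p = {p, ..., p + alpha - 1}
   taken modulo K; these demands are admissible and pairwise distinct.  Since
   user pi p decodes from the broadcast and its cache, the bits of its file
   that none of pi 0, ..., pi p caches are all recovered from the broadcast
   alone once the earlier files are known, so the broadcast is at least as
   long as all of them together.  Averaging over f and the K! orderings, a bit
   whose set of cachers is C is counted with a weight depending only on |C|
   (the symmetric group is transitive on flags C <= S), which double counting
   evaluates; this gives R >= the average over bits of load_lb |C|, where
   load_lb i = (alpha - i)((K - alpha)(i + 1) + alpha) / (alpha (i + 1)).
   As load_lb is convex and nonincreasing, its tangent line at t together with
   the memory constraint (average |C| <= t) yields R >= load_lb t, and
   load_lb t - (K - t)/(t + 1) = (K - alpha) t (alpha - 1 - t) / (alpha (t + 1)). *)

From HB Require Import structures.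
From mathcomp Require Import all_boot all_order all_algebra.
From mathcomp Require Import boolp classical_sets reals.
From mathcomp Require Import all_fingroup zify ring lra.
Import Order.TTheory GRing.Theory Num.Theory.

Set Implicit Arguments.
Unset Strict Implicit.
Unset Printing Implicit Defensive.

Section ChainBound.
Variables (K alpha F B L : nat).
Variables (Z : 'I_K -> {set bitT K alpha F B}) (d : 'I_K -> fileT K alpha F).
Variable enc : libT K alpha F B -> L.-tuple bool.
Hypothesis decodable : forall k : 'I_K,
  exists dec : L.-tuple bool -> {ffun bitT K alpha F B -> option bool} ->
               {ffun 'I_B -> bool},
    forall W, dec (enc W) (cacheof (Z k) W) = fileof W (d k).
Hypothesis d_inj : injective d.

Definition uncached_bits (p : 'I_K) : {set bitT K alpha F B} :=
  [set x | (x.1 == d p) && [forall (q : 'I_K | q <= p), x \notin Z q]].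

Let Ubits := \bigcup_p uncached_bits p.

Lemma uncached_bits_disjoint p q :
  p != q -> [disjoint uncached_bits p & uncached_bits q].
Proof.
move=> neq_pq; apply/pred0P => x /=; rewrite !inE.
apply/negP => /andP[/andP[/eqP xp _] /andP[/eqP xq _]].
by move: neq_pq; rewrite (d_inj (etrans (esym xp) xq)) eqxx.
Qed.

Lemma enc_inj_off_uncached (W W' : libT K alpha F B) :
  {in ~: Ubits, W =1 W'} -> enc W = enc W' -> W = W'.
Proof.
move=> eqW eq_enc.
have file_eq n (p : 'I_K) : p < n -> forall x, x.1 = d p -> W x = W' x.
  elim: n p => [//|n IH] p lt_pn x xp.
  have [dec decP] := decodable p.
  have cache_eq : cacheof (Z p) W = cacheof (Z p) W'.
    apply/ffunP => y; rewrite !ffunE; case: ifP => // yZ; congr Some.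
    have [/bigcupP[q _]|yU] := boolP (y \in Ubits); last by apply: eqW; rewrite inE.
    rewrite inE => /andP[/eqP yq /forall_inP yfree]; apply: (IH q) yq.
    have lt_qp : q < p by rewrite ltnNge; apply/negP => /yfree; rewrite yZ.
    exact: leq_trans lt_qp lt_pn.
  have := decP W; rewrite eq_enc cache_eq decP => /ffunP/(_ x.2).
  by rewrite !ffunE -xp -surjective_pairing.
apply/ffunP => x; have [/bigcupP[p _]|xU] := boolP (x \in Ubits).
  by rewrite inE => /andP[/eqP /(file_eq p.+1 p (ltnSn p))].
by apply: eqW; rewrite inE.
Qed.

Lemma sum_card_uncached_le : \sum_p #|uncached_bits p| <= L.
Proof.
have <- : #|Ubits| = \sum_p #|uncached_bits p|.
  rewrite -sum1_card (partition_disjoint_bigcup _ _ uncached_bits_disjoint).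
  by apply: eq_bigr => p _; rewrite sum1_card.
pose g (G : {set bitT K alpha F B}) := enc [ffun x => x \in G].
have g_inj : {in powerset Ubits &, injective g}.
  move=> G G'; rewrite !powersetE => sGU sG'U /enc_inj_off_uncached eqG.
  apply/finset.setP => x; suff /ffunP/(_ x) : [ffun x => x \in G] = [ffun x => x \in G'].
    by rewrite !ffunE.
  apply: eqG => y; rewrite inE => yU; rewrite !ffunE.
  by rewrite (contraNF (fintype.subsetP sGU y)) // (contraNF (fintype.subsetP sG'U y)).
rewrite -(leq_exp2l _ _ (ltnSn 1)) -card_powerset -(card_in_imset g_inj).
by rewrite (leq_trans (max_card _)) // card_tuple card_bool.
Qed.

End ChainBound.

Section CyclicWindows.
Variables (K alpha : nat).
Hypotheses (alpha_gt0 : 0 < alpha) (alpha_lt_K : alpha < K).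

Definition addmod (p o : nat) := if p + o < K then p + o else p + o - K.

Definition window (p : 'I_K) : {set 'I_K} :=
  [set insubd p (addmod p o) | o : 'I_alpha].

Definition window_after (p : 'I_K) : {set 'I_K} := [set q : 'I_K | p < q < p + alpha].

Lemma val_insubd_addmod (p : 'I_K) o : o < K -> val (insubd p (addmod p o)) = addmod p o.
Proof.
move=> lt_oK; have lt_pK := ltn_ord p.
by rewrite val_insubd (_ : addmod p o < K) // /addmod; case: ifP; lia.
Qed.

Lemma mem_window (p q : 'I_K) :
  (q \in window p) = (p <= q < p + alpha) || (q + K < p + alpha).
Proof.
have lt_pK := ltn_ord p; have lt_qK := ltn_ord q.
apply/imsetP/idP => [[o _ ->]|q_win].
  have lt_oa := ltn_ord o; by rewrite val_insubd_addmod /addmod; [repeat case: ifP => ?|]; lia.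
have lt_oa : (if p <= q then q - p else q + K - p) < alpha by case: ifP; lia.
exists (Ordinal lt_oa) => //; apply: val_inj => /=.
rewrite val_insubd_addmod /addmod; last by case: ifP; lia.
by move: lt_oa; case: (leqP p q) => ? ?; case: ifP => ?; lia.
Qed.

Lemma card_window p : #|window p| = alpha.
Proof.
rewrite card_imset ?card_ord // => o1 o2 /(congr1 val).
have lt1 := ltn_ord o1; have lt2 := ltn_ord o2.
rewrite !val_insubd_addmod ?(ltn_trans _ alpha_lt_K) // /addmod => eq12.
by apply: val_inj => /=; move: eq12; have := ltn_ord p; repeat case: ifP => ?; lia.
Qed.

Lemma mem_window_self p : p \in window p.
Proof. by rewrite mem_window; lia. Qed.

Lemma window_inj : injective window.
Proof.
suff win_le (p q : 'I_K) : p <= q -> window p = window q -> p = q.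
  move=> p q eq_win; case: (leqP p q) => [le_pq|/ltnW le_qp]; first exact: win_le.
  exact/esym/win_le.
move=> le_pq eq_win; apply/val_inj/eqP; rewrite /= eqn_leq le_pq leqNgt /=.
apply/negP => lt_pq; have lt_pK := ltn_ord p; have lt_qK := ltn_ord q.
have := mem_window_self q; rewrite -eq_win mem_window => q_win.
pose e := insubd p (addmod p alpha) : 'I_K.
have val_e : val e = addmod p alpha by rewrite val_insubd_addmod.
have : e \notin window p by rewrite mem_window val_e /addmod; case: ifP => ?; lia.
by rewrite eq_win mem_window val_e /addmod; move: q_win; case: ifP => ?; lia.
Qed.

Lemma window_after_sub p : window_after p \subset window p.
Proof. by apply/fintype.subsetP => q; rewrite inE mem_window; lia. Qed.

Lemma mem_window_after (p q : 'I_K) : q \in window p -> p < q -> q \in window_after p.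
Proof. by rewrite mem_window inE; have := ltn_ord q; lia. Qed.

Lemma card_window_after_ge (p : 'I_K) : minn (alpha - 1) (K - 1 - p) <= #|window_after p|.
Proof.
set m := minn _ _; have lt_pK := ltn_ord p.
have lt_shift (o : 'I_m) : p + 1 + o < K by have := ltn_ord o; rewrite /m; lia.
pose g (o : 'I_m) := insubd p (p + 1 + o) : 'I_K.
have val_g o : val (g o) = p + 1 + o by rewrite val_insubd lt_shift.
have g_inj : injective g.
  by move=> o1 o2 /(congr1 val); rewrite !val_g => eq12; apply: val_inj => /=; lia.
rewrite -[m]card_ord -(card_imset _ g_inj); apply: subset_leq_card.
apply/fintype.subsetP => _ /imsetP[o _ ->].
by rewrite inE val_g; have := ltn_ord o; rewrite /m; lia.
Qed.

End CyclicWindows.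

Section FlagTransitivity.
Variable T : finType.

Lemma perm_of_uniq (s s' : seq T) :
  uniq s -> uniq s' -> size s = size s' -> (forall x, x \in s) ->
  exists sigma : {perm T}, map sigma s = s'.
Proof.
move=> s_uniq s'_uniq eq_size s_full.
pose f x := nth x s' (index x s).
have f_nth x0 i : i < size s -> f (nth x0 s i) = nth x0 s' i.
  by move=> lt_is; rewrite /f index_uniq //; apply: set_nth_default; rewrite -eq_size.
have f_inj : injective f.
  move=> x y eq_f.
  have : nth x s' (index x s) = nth x s' (index y s).
    by rewrite -!f_nth ?index_mem ?nth_index.
  move/eqP; rewrite nth_uniq -?eq_size ?index_mem // => /eqP eq_idx.
  by rewrite -(nth_index x (s_full x)) eq_idx nth_index.
exists (perm f_inj); case E: s => [|x0 s0].
  by move: eq_size; rewrite E => /esym/size0nil.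
rewrite -E; apply: (@eq_from_nth _ x0); rewrite size_map // => i lt_is.
by rewrite (nth_map x0) // permE f_nth.
Qed.

Lemma imset_perm_prefix (sigma : {perm T}) (u v u' v' : seq T) :
  size u = size u' -> map sigma (u ++ v) = u' ++ v' -> sigma @: [set:: u] = [set:: u'].
Proof.
move=> eq_size; rewrite map_cat => /eqP; rewrite eqseq_cat ?size_map //.
case/andP=> /eqP <- _; apply/finset.setP => y; rewrite inE.
by apply/imsetP/mapP => -[x]; rewrite ?inE => ux ->; exists x; rewrite ?inE.
Qed.

Definition flag_seq (S C : {set T}) := enum C ++ enum (S :\: C) ++ enum (~: S).

Lemma flag_seq_uniq (S C : {set T}) : C \subset S -> uniq (flag_seq S C).
Proof.
move=> sCS; rewrite /flag_seq !cat_uniq !enum_uniq /= andbT.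
apply/andP; split; apply/hasPn => x; rewrite ?mem_cat !mem_enum !inE.
  by have := fintype.subsetP sCS x; case: (x \in C); case: (x \in S).
by case: (x \in S); rewrite ?andbF.
Qed.

Lemma size_flag_seq (S C : {set T}) : C \subset S -> size (flag_seq S C) = #|T|.
Proof.
move=> sCS; rewrite !size_cat -!cardE cardsDS // addnA subnKC ?subset_leq_card //.
exact: cardsC.
Qed.

Lemma flag_transitive (S C S' C' : {set T}) :
  C \subset S -> C' \subset S' -> #|S| = #|S'| -> #|C| = #|C'| ->
  exists sigma : {perm T}, sigma @: S = S' /\ sigma @: C = C'.
Proof.
move=> sCS sCS' eqS eqC.
have [|x|sigma eq_flag] := perm_of_uniq (flag_seq_uniq sCS) (flag_seq_uniq sCS').
- by rewrite !size_flag_seq.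
- by rewrite !mem_cat !mem_enum !inE; case: (x \in C); case: (x \in S).
have set_head (A B : {set T}) : B \subset A -> [set:: enum B ++ enum (A :\: B)] = A.
  move=> sBA; apply/finset.setP => x; rewrite !inE mem_cat !mem_enum !inE.
  by case: (boolP (x \in B)) => [/(fintype.subsetP sBA) ->|]; case: (x \in A).
exists sigma; split.
  rewrite -(set_head _ _ sCS) -(set_head _ _ sCS'); apply: imset_perm_prefix.
    by rewrite !size_cat -!cardE !cardsDS // eqS eqC.
  by rewrite -!catA; exact: eq_flag.
have := imset_perm_prefix _ eq_flag; rewrite -!cardE => /(_ eqC).
by rewrite !set_enum.
Qed.

End FlagTransitivity.

Lemma card_flags (T : finType) a i :
  \sum_(S : {set T} | #|S| == a) \sum_(C : {set T} | (C \subset S) && (#|C| == i)) 1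
  = 'C(#|T|, a) * 'C(a, i).
Proof.
rewrite (eq_bigr (fun _ => 'C(a, i))) => [|S /eqP <-]; last first.
  by rewrite -cards_draws -sum1_card big_mkcond [RHS]big_mkcond; apply: eq_bigr => C _; rewrite inE.
rewrite sum_nat_const -card_draws; congr (_ * _).
by apply: eq_card => S; rewrite !inE.
Qed.

Lemma card_perm_ord n : #|{: {perm 'I_n}}| = n`!.
Proof. by rewrite -card_Sn; apply: eq_card => s; rewrite !inE. Qed.

Lemma card_sum_mem (T : finType) (A : {set T}) : #|A| = (\sum_x (x \in A))%N.
Proof. by rewrite -sum1_card big_mkcond; apply: eq_bigr => x _; case: (x \in A). Qed.

Section WindowPermutations.
Variables (K alpha : nat).
Hypotheses (alpha_gt0 : 0 < alpha) (alpha_lt_K : alpha < K).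

Definition window_perms (p : 'I_K) (S C : {set 'I_K}) : {set {perm 'I_K}} :=
  [set pi : {perm 'I_K} | (pi @: window alpha p == S) && (C \subset pi @: window_after alpha p)].

Lemma imset_permM (pi s : {perm 'I_K}) (A : {set 'I_K}) :
  (pi * s)%g @: A = s @: (pi @: A).
Proof. by rewrite -imset_comp; apply: eq_imset => x; rewrite permM. Qed.

Lemma card_window_perms_le p S C (s : {perm 'I_K}) :
  #|window_perms p S C| <= #|window_perms p (s @: S) (s @: C)|.
Proof.
rewrite -(card_imset _ (mulIg s)); apply: subset_leq_card.
apply/fintype.subsetP => z /imsetP[pi]; rewrite inE => /andP[/eqP winS sCwin] ->.
by rewrite inE !imset_permM winS eqxx imsetS.
Qed.

Lemma card_window_perms_flag p (S C S' C' : {set 'I_K}) :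
  C \subset S -> C' \subset S' -> #|S| = #|S'| -> #|C| = #|C'| ->
  #|window_perms p S C| = #|window_perms p S' C'|.
Proof.
move=> sCS sCS' eqS eqC; apply/eqP; rewrite eqn_leq.
have [s [E1 E2]] := flag_transitive sCS sCS' eqS eqC.
have [s' [E3 E4]] := flag_transitive sCS' sCS (esym eqS) (esym eqC).
apply/andP; split; first by rewrite -E1 -E2; exact: card_window_perms_le.
by rewrite -E3 -E4; exact: card_window_perms_le.
Qed.

Lemma sum_card_window_perms p i :
  \sum_(S : {set 'I_K} | #|S| == alpha)
    \sum_(C : {set 'I_K} | (C \subset S) && (#|C| == i)) #|window_perms p S C|
  = K`! * 'C(#|window_after alpha p|, i).
Proof.
have one_window (pi : {perm 'I_K}) :
    \sum_(S : {set 'I_K} | #|S| == alpha)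
      \sum_(C : {set 'I_K} | (C \subset S) && (#|C| == i))
        (pi \in window_perms p S C : nat)
    = 'C(#|window_after alpha p|, i).
  rewrite (bigD1 (pi @: window alpha p)) /=; last first.
    by rewrite card_imset ?(card_window alpha_gt0 alpha_lt_K) //; exact: perm_inj.
  rewrite [X in _ + X]big1 ?addn0 => [|S /andP[_ neS]]; last first.
    by apply: big1 => C _; rewrite inE eq_sym (negbTE neS).
  rewrite -(card_imset (window_after alpha p) (@perm_inj _ pi)) -cards_draws -sum1_card.
  rewrite big_mkcond [RHS]big_mkcond /=; apply: eq_bigr => C _; rewrite !inE eqxx /=.
  have sAW := imsetS pi (window_after_sub alpha_gt0 alpha_lt_K p).
  case: (boolP (C \subset pi @: window_after alpha p)) => [sC|_]; last by case: (_ && _).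
  by rewrite (fintype.subset_trans sC sAW).
under eq_bigr => S _ do rewrite (eq_bigr _ (fun C _ => card_sum_mem _)) exchange_big /=.
by rewrite exchange_big /= (eq_bigr _ (fun pi _ => one_window pi)) sum_nat_const card_perm_ord.
Qed.

Lemma card_window_perms p i (S C : {set 'I_K}) :
  #|S| = alpha -> C \subset S -> #|C| = i ->
  'C(K, alpha) * 'C(alpha, i) * #|window_perms p S C|
  = K`! * 'C(#|window_after alpha p|, i).
Proof.
move=> cardS sCS cardC.
rewrite -sum_card_window_perms -[K in 'C(K, _)]card_ord -card_flags big_distrl /=.
apply: eq_bigr => S' /eqP cardS'; rewrite big_distrl /=.
apply: eq_bigr => C' /andP[sCS' /eqP cardC']; rewrite mul1n.
by apply: card_window_perms_flag; rewrite ?cardS ?cardS' ?cardC ?cardC'.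
Qed.
End WindowPermutations.

Lemma hockey_stick n i : \sum_(p < n) 'C(p, i) = 'C(n, i.+1).
Proof. by elim: n => [|n IHn]; rewrite ?big_ord0 // big_ord_recr /= IHn binS. Qed.

Lemma sum_bin_minn alpha i k : 0 < alpha ->
  \sum_(p < alpha + k) 'C(minn (alpha - 1) p, i)
  = 'C(alpha, i.+1) + k * 'C(alpha - 1, i).
Proof.
move=> alpha_gt0; elim: k => [|k IHk].
  rewrite addn0 mul0n addn0 -hockey_stick; apply: eq_bigr => p _.
  by congr 'C(_, _); have := ltn_ord p; lia.
rewrite addnS big_ord_recr /= IHk mulSn (_ : minn _ _ = alpha - 1); first lia.
by apply/minn_idPl; lia.
Qed.

Lemma sum_bin_minn_rev K alpha i : 0 < alpha -> alpha <= K ->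
  \sum_(p < K) 'C(minn (alpha - 1) (K - 1 - p), i)
  = 'C(alpha, i.+1) + (K - alpha) * 'C(alpha - 1, i).
Proof.
move=> alpha_gt0 le_aK; rewrite -(sum_bin_minn i (K - alpha) alpha_gt0) subnKC //.
rewrite (reindex_inj rev_ord_inj) /=; apply: eq_bigr => p _.
by congr 'C(minn _ _, _); have := ltn_ord p; lia.
Qed.

Lemma card_bitT K alpha F B : #|{: bitT K alpha F B}| = Nfiles K alpha F * B.
Proof.
rewrite card_prod card_ord card_sig /Nfiles -[in 'C(K, _)](card_ord K) -card_draws.
congr (_ * _); rewrite -[F in F * _]card_ord -cardX.
by apply: eq_card => -[f S]; rewrite !inE.
Qed.

Local Open Scope ring_scope.

Definition load_lb (R : realFieldType) (a k x : R) : R :=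
  (a - x) * ((k - a) * (x + 1) + a) / (a * (x + 1)).

Definition load_lb_slope (R : realFieldType) (a k tau : R) : R :=
  (k - a) / a + (a + 1) / (tau + 1) ^+ 2.

Lemma load_lb_slope_ge0 (R : realFieldType) (a k tau : R) :
  0 < a -> a <= k -> 0 <= load_lb_slope a k tau.
Proof.
move=> a_gt0 le_ak; apply: addr_ge0; apply: divr_ge0; rewrite ?subr_ge0 ?sqr_ge0 //.
  exact: ltW.
by rewrite addr_ge0 // ltW.
Qed.

Lemma load_lb_tangent (R : realFieldType) (a k x tau : R) :
  0 < a -> 0 <= x -> 0 <= tau ->
  load_lb a k tau - load_lb_slope a k tau * (x - tau) <= load_lb a k x.
Proof.
move=> a_gt0 x_ge0 tau_ge0.
have x1_neq0 : x + 1 != 0 by rewrite gt_eqF // ltr_wpDl.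
have tau1_neq0 : tau + 1 != 0 by rewrite gt_eqF // ltr_wpDl.
(* The gap between the graph and its tangent line is a square. *)
have -> : load_lb a k x = load_lb a k tau - load_lb_slope a k tau * (x - tau)
    + (a + 1) * (x - tau) ^+ 2 / ((x + 1) * (tau + 1) ^+ 2).
  by rewrite /load_lb /load_lb_slope; field; rewrite x1_neq0 tau1_neq0 gt_eqF.
rewrite lerDl; apply: divr_ge0; apply: mulr_ge0; rewrite ?sqr_ge0 //; lra.
Qed.

Lemma load_lb_jensen (R : realFieldType) (a k : R) (X : finType) (g : X -> R) (tau : R) :
  0 < a -> a <= k -> (forall x, 0 <= g x) -> 0 <= tau -> \sum_x g x <= #|X|%:R * tau ->
  #|X|%:R * load_lb a k tau <= \sum_x load_lb a k (g x).
Proof.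
move=> a_gt0 le_ak g_ge0 tau_ge0 sum_g.
have tangent_sum : \sum_x (load_lb a k tau - load_lb_slope a k tau * (g x - tau))
    <= \sum_x load_lb a k (g x).
  by apply: ler_sum => x _; exact: (load_lb_tangent k a_gt0 (g_ge0 x) tau_ge0).
apply: le_trans tangent_sum.
rewrite sumrB sumr_const -mulr_sumr sumrB sumr_const mulr_natl lerBrDr gerDl.
by rewrite mulr_ge0_le0 ?load_lb_slope_ge0 // subr_le0 -mulr_natl.
Qed.

Lemma load_lb_subMAN (R : realFieldType) (a k t : R) : 0 < a -> 0 <= t ->
  load_lb a k t - (k - t) / (t + 1) = (k - a) * t * (a - 1 - t) / (a * (t + 1)).
Proof.
move=> a_gt0 t_ge0; have t1_neq0 : t + 1 != 0 by rewrite gt_eqF // ltr_wpDl.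
by rewrite /load_lb; field; rewrite t1_neq0 gt_eqF.
Qed.

Lemma load_lb_nat (R : realFieldType) K alpha i :
  (0 < alpha)%N -> (i <= alpha)%N -> (alpha <= K)%N ->
  load_lb alpha%:R K%:R i%:R
  = ('C(alpha, i.+1) + (K - alpha) * 'C(alpha - 1, i))%N%:R / 'C(alpha, i)%:R :> R.
Proof.
move=> alpha_gt0 le_ia le_aK.
have bin_identity : (('C(alpha, i.+1) + (K - alpha) * 'C(alpha - 1, i)) * (alpha * i.+1)
    = 'C(alpha, i) * ((alpha - i) * ((K - alpha) * i.+1 + alpha)))%N.
  have E1 := mul_bin_left alpha i; have E2 := mul_bin_down alpha i; rewrite -subn1 in E2.
  rewrite mulnDl (_ : (_ * (alpha * i.+1) = alpha * (i.+1 * 'C(alpha, i.+1)))%N); last lia.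
  rewrite (_ : (_ * 'C(alpha - 1, i) * _ = (K - alpha) * i.+1 * (alpha * 'C(alpha - 1, i)))%N).
    by rewrite E1 E2; lia.
  lia.
have bin_neq0 : 'C(alpha, i)%:R != 0 :> R by rewrite pnatr_eq0 -lt0n bin_gt0.
have den_neq0 : alpha%:R * (i%:R + 1) != 0 :> R.
  by rewrite natr1 -natrM pnatr_eq0 muln_eq0 negb_or -!lt0n alpha_gt0.
rewrite /load_lb; apply/eqP; rewrite eqr_div // -natrB // -natrB // natr1.
by rewrite -!natrM -!natrD -!natrM eqr_nat bin_identity mulnC.
Qed.

Section SchemeLowerBound.
Variables (R : realFieldType) (K alpha F B : nat) (Rl : R).
Hypotheses (alpha_gt0 : (0 < alpha)%N) (alpha_lt_K : (alpha < K)%N).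
Variable Z : 'I_K -> {set bitT K alpha F B}.
Hypothesis Z_selfish : forall k x, x \in Z k -> k \in fileSet x.1.
Hypothesis deliverable : forall d : {ffun 'I_K -> fileT K alpha F}, admissible d ->
  exists L : nat, L%:R <= Rl * B%:R /\
  exists enc : libT K alpha F B -> L.-tuple bool,
    forall k : 'I_K,
    exists dec : L.-tuple bool -> {ffun bitT K alpha F B -> option bool} ->
                 {ffun 'I_B -> bool},
      forall W, dec (enc W) (cacheof (Z k) W) = fileof W (d k).

Lemma card_imset_window (pi : {perm 'I_K}) p : #|pi @: window alpha p| == alpha.
Proof. by rewrite card_imset ?(card_window alpha_gt0 alpha_lt_K) //; exact: perm_inj. Qed.

Definition window_file (f : 'I_F) (pi : {perm 'I_K}) (p : 'I_K) : fileT K alpha F :=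
  exist _ (f, pi @: window alpha p) (card_imset_window pi p).

Definition window_demand (f : 'I_F) (pi : {perm 'I_K}) : {ffun 'I_K -> fileT K alpha F} :=
  [ffun u => window_file f pi (pi^-1 u)%g].

Lemma window_demandE f pi p : window_demand f pi (pi p) = window_file f pi p.
Proof. by rewrite ffunE permK. Qed.

Lemma window_demand_admissible f pi : admissible (window_demand f pi).
Proof.
move=> u; rewrite /fileSet ffunE /= -{1}(permKV pi u).
by apply: imset_f; exact: mem_window_self.
Qed.

Lemma window_file_inj f pi : injective (window_file f pi).
Proof.
move=> p q /(congr1 val) [] /(imset_inj (@perm_inj _ pi)).
exact: window_inj.
Qed.

Let uncached f (pi : {perm 'I_K}) :=
  uncached_bits (fun q => Z (pi q)) (window_file f pi).

Lemma sum_card_uncached_window_le f pi : (\sum_p #|uncached f pi p|)%:R <= Rl * B%:R.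
Proof.
have [L [le_L [enc decodable]]] := deliverable (window_demand_admissible f pi).
apply: le_trans le_L; rewrite ler_nat.
apply: (sum_card_uncached_le (enc := enc)) (@window_file_inj f pi).
move=> p; have [dec decP] := decodable (pi p); exists dec => W.
by have := decP W; rewrite window_demandE.
Qed.

Definition cachers (x : bitT K alpha F B) : {set 'I_K} := [set k | x \in Z k].

Lemma cachers_sub x : cachers x \subset fileSet x.1.
Proof. by apply/fintype.subsetP => k; rewrite inE; exact: Z_selfish. Qed.

Lemma mem_uncached_window f pi p x :
  (x \in uncached f pi p) = [&& (val x.1).1 == f, pi @: window alpha p == fileSet x.1
                            & cachers x \subset pi @: window_after alpha p].
Proof.
rewrite inE (_ : x.1 == _ = ((val x.1).1 == f) && (pi @: window alpha p == fileSet x.1)).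
  case: eqP => //= _; case: eqP => //= win_eq.
  apply/forall_inP/fintype.subsetP => [free k|sub q le_qp].
    rewrite inE => xZ; have := fintype.subsetP (cachers_sub x) k; rewrite inE xZ -win_eq.
    case/(_ isT)/imsetP => q q_win eq_k; rewrite eq_k; apply: imset_f.
    apply: (mem_window_after alpha_gt0 alpha_lt_K q_win); rewrite ltnNge.
    by apply/negP => /free; rewrite -eq_k xZ.
  apply/negP => xZ; have : pi q \in cachers x by rewrite inE.
  case/sub/imsetP => q' q'_after /perm_inj eq_q; move: q'_after; rewrite -eq_q inE.
  by move: le_qp; lia.
by case: x => -[[f' S'] ?] b; rewrite -val_eqE /= xpair_eqE [in X in _ && X]eq_sym.
Qed.

Lemma card_uncached_windowsE :
  (\sum_(f : 'I_F) \sum_(pi : {perm 'I_K}) \sum_p #|uncached f pi p|)%N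
  = (\sum_(x : bitT K alpha F B) \sum_p #|window_perms alpha p (fileSet x.1) (cachers x)|)%N.
Proof.
transitivity (\sum_(f : 'I_F) \sum_(x : bitT K alpha F B) \sum_(pi : {perm 'I_K})
                 \sum_p (x \in uncached f pi p) : nat)%N.
  apply: eq_bigr => f _; rewrite [RHS]exchange_big /=; apply: eq_bigr => pi _.
  by rewrite [RHS]exchange_big /=; apply: eq_bigr => p _; exact: card_sum_mem.
rewrite exchange_big /=; apply: eq_bigr => x _.
rewrite (bigD1 (val x.1).1) //= [X in (_ + X)%N]big1 ?addn0 => [|f ne_f]; last first.
  by apply: big1 => pi _; apply: big1 => p _; rewrite mem_uncached_window eq_sym (negbTE ne_f).
rewrite exchange_big /=; apply: eq_bigr => p _; rewrite card_sum_mem; apply: eq_bigr => pi _.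
by rewrite mem_uncached_window eqxx inE.
Qed.

Lemma window_perms_weight_ge x :
  K`!%:R / 'C(K, alpha)%:R * load_lb alpha%:R K%:R #|cachers x|%:R
  <= (\sum_p #|window_perms alpha p (fileSet x.1) (cachers x)|)%:R :> R.
Proof.
set i := #|cachers x|; set W := (\sum_p _)%N.
have card_file : #|fileSet x.1| = alpha by apply/eqP; exact: (valP x.1).
have le_ia : (i <= alpha)%N by rewrite -card_file subset_leq_card ?cachers_sub.
set Q := ('C(alpha, i.+1) + (K - alpha) * 'C(alpha - 1, i))%N.
have counting : (K`! * Q <= 'C(K, alpha) * 'C(alpha, i) * W)%N.
  rewrite /W big_distrr /= (eq_bigr _ (fun p _ =>
    card_window_perms alpha_gt0 alpha_lt_K p card_file (cachers_sub x) (erefl i))).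
  rewrite -big_distrr /= leq_mul2l /Q -(sum_bin_minn_rev i alpha_gt0 (ltnW alpha_lt_K)).
  by apply/orP; right; apply: leq_sum => p _; apply/leq_bin2l/card_window_after_ge.
have binK_gt0 : 0 < 'C(K, alpha)%:R :> R by rewrite ltr0n bin_gt0 ltnW.
have bin_gt0 : 0 < 'C(alpha, i)%:R :> R by rewrite ltr0n bin_gt0.
rewrite load_lb_nat ?(ltnW alpha_lt_K) // -/Q.
rewrite (_ : _ * (_ / _) = (K`! * Q)%:R / ('C(K, alpha) * 'C(alpha, i))%:R); last first.
  by rewrite !natrM; field; rewrite !gt_eqF.
by rewrite ler_pdivrMr ?natrM ?mulr_gt0 // -!natrM ler_nat [X in (_ <= X)%N]mulnC.
Qed.

Lemma card_uncached_windows_le :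
  (\sum_(f : 'I_F) \sum_(pi : {perm 'I_K}) \sum_p #|uncached f pi p|)%N%:R
  <= (F * K`! * B)%:R * Rl.
Proof.
apply: (@le_trans _ _ (\sum_(f : 'I_F) \sum_(pi : {perm 'I_K}) Rl * B%:R)).
  rewrite natr_sum; apply: ler_sum => f _; rewrite natr_sum; apply: ler_sum => pi _.
  exact: sum_card_uncached_window_le.
rewrite !sumr_const card_ord card_perm_ord -[_ *+ K`!]mulr_natl -[_ *+ F]mulr_natl !natrM.
by rewrite le_eqVlt; apply/orP; left; apply/eqP; ring.
Qed.

Variable t : nat.
Hypothesis Z_mem :
  forall k, #|Z k|%:R <= t%:R * (Nfiles K alpha F)%:R / K%:R * B%:R :> R.

Lemma sum_card_cachers_le :
  \sum_x #|cachers x|%:R <= #|{: bitT K alpha F B}|%:R * t%:R :> R.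
Proof.
have -> : \sum_x #|cachers x|%:R = (\sum_k #|Z k|)%N%:R :> R.
  rewrite -natr_sum; congr _%:R.
  transitivity (\sum_(x : bitT K alpha F B) \sum_k (x \in Z k) : nat)%N.
    by apply: eq_bigr => x _; rewrite card_sum_mem; apply: eq_bigr => k _; rewrite inE.
  by rewrite exchange_big; apply: eq_bigr => k _; rewrite card_sum_mem.
rewrite natr_sum; apply: le_trans (ler_sum _ (fun k _ => Z_mem k)) _.
rewrite sumr_const card_ord card_bitT -[_ *+ K]mulr_natl natrM le_eqVlt; apply/orP; left.
by apply/eqP; field; rewrite pnatr_eq0 -lt0n (ltn_trans alpha_gt0 alpha_lt_K).
Qed.

Lemma card_uncached_windows_ge :
  (F * K`! * B)%:R * load_lb alpha%:R K%:R t%:R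
  <= (\sum_(f : 'I_F) \sum_(pi : {perm 'I_K}) \sum_p #|uncached f pi p|)%N%:R :> R.
Proof.
rewrite card_uncached_windowsE natr_sum.
apply: le_trans (ler_sum _ (fun x _ => window_perms_weight_ge x)).
have binK_gt0 : 0 < 'C(K, alpha)%:R :> R by rewrite ltr0n bin_gt0 ltnW.
set c := K`!%:R / 'C(K, alpha)%:R.
rewrite -mulr_sumr (_ : (F * K`! * B)%:R = c * (Nfiles K alpha F * B)%:R).
  rewrite -mulrA ler_wpM2l ?divr_ge0 // -card_bitT.
  apply: load_lb_jensen sum_card_cachers_le => [||x|]; rewrite ?ltr0n ?ler0n //.
  by rewrite ler_nat ltnW.
by rewrite /c /Nfiles !natrM; field; rewrite gt_eqF.
Qed.

Lemma load_lb_le_rate : (0 < B)%N -> (0 < F)%N -> load_lb alpha%:R K%:R t%:R <= Rl.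
Proof.
move=> B_gt0 F_gt0; have pos : 0 < (F * K`! * B)%:R :> R.
  by rewrite ltr0n !muln_gt0 F_gt0 fact_gt0 B_gt0.
by rewrite -(ler_pM2l pos); exact: le_trans card_uncached_windows_ge card_uncached_windows_le.
Qed.

End SchemeLowerBound.

Lemma R_MAN_le_load_lb (R : realType) K alpha t :
  (t < alpha)%N -> (alpha < K)%N -> R_MAN R K t <= load_lb alpha%:R K%:R t%:R.
Proof.
move=> lt_ta lt_aK; rewrite -subr_ge0 load_lb_subMAN ?ltr0n ?(leq_ltn_trans _ lt_ta) //.
have : t.+1%:R <= alpha%:R :> R by rewrite ler_nat.
have : alpha%:R < K%:R :> R by rewrite ltr_nat.
have := ler0n R t; rewrite -natr1 => ? ? ?.
by apply: divr_ge0; apply: mulr_ge0; try apply: mulr_ge0; lra.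
Qed.

Lemma R_MAN_lt_load_lb (R : realType) K alpha t :
  (0 < t)%N -> (t.+1 < alpha)%N -> (alpha < K)%N ->
  R_MAN R K t < load_lb alpha%:R K%:R t%:R.
Proof.
move=> t_gt0 lt_ta lt_aK; rewrite -subr_gt0 load_lb_subMAN ?ltr0n //; last lia.
have : t.+2%:R <= alpha%:R :> R by rewrite ler_nat.
have : alpha%:R < K%:R :> R by rewrite ltr_nat.
have : 0 < t%:R :> R by rewrite ltr0n.
rewrite -!natr1 => ? ? ?.
by apply: divr_gt0; apply: mulr_gt0; try apply: mulr_gt0; lra.
Qed.

Lemma achievable_us_broadcast_all (R : realType) K alpha F (M : R) : 0 <= M ->
  achievable_us K alpha F M #|{: bitT K alpha F 1}|%:R.
Proof.
move=> M_ge0; exists 1%N; split => //; exists (fun _ => finset.set0).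
split; first by move=> k; rewrite cards0 mulr1.
split=> [k x|d _]; first by rewrite inE.
exists #|{: bitT K alpha F 1}|; split; first by rewrite mulr1.
exists (fun W => fgraph W) => k.
exists (fun s _ => [ffun i => tnth s (enum_rank (d k, i))]) => W.
by apply/ffunP => i; rewrite !ffunE tnth_fgraph enum_rankK.
Qed.

Lemma load_lb_le_Rstar_t (R : realType) K alpha F t :
  (0 < alpha)%N -> (alpha < K)%N -> (0 < F)%N ->
  load_lb alpha%:R K%:R t%:R <= Rstar_t R K alpha F t.
Proof.
move=> alpha_gt0 alpha_lt_K F_gt0; apply: lb_le_inf.
  by eexists; apply: achievable_us_broadcast_all; rewrite divr_ge0 ?mulr_ge0.
move=> Rl [B [B_gt0 [Z [Z_mem [Z_selfish deliverable]]]]].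
exact (load_lb_le_rate alpha_gt0 alpha_lt_K Z_selfish deliverable Z_mem B_gt0 F_gt0).
Qed.

Unset Implicit Arguments.

Theorem corollary1 (R : realType) (K alpha F : nat) :
  (3 <= K)%N -> (2 <= alpha)%N -> (alpha <= K - 1)%N -> (0 < F)%N ->
  (K <= Nfiles K alpha F)%N ->
  (forall t : nat, (t <= alpha - 1)%N ->
     1 <= Rstar_t R K alpha F t / R_MAN R K t) /\
  (forall t : nat, (1 <= t)%N -> (t <= alpha - 2)%N ->
     1 < Rstar_t R K alpha F t / R_MAN R K t).
Proof.
move=> K_ge3 alpha_ge2 alpha_le F_gt0 _.
have alpha_gt0 : (0 < alpha)%N by lia.
have alpha_lt_K : (alpha < K)%N by lia.
have MAN_gt0 t : (t < alpha)%N -> 0 < R_MAN R K t.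
  move=> lt_ta; apply: divr_gt0; last by rewrite ltr_wpDl.
  by rewrite subr_gt0 ltr_nat; lia.
have Rstar_ge := load_lb_le_Rstar_t R _ alpha_gt0 alpha_lt_K F_gt0.
split=> [t le_t|t t_ge1 le_t].
  rewrite ler_pdivlMr ?mul1r; last by apply: MAN_gt0; lia.
  by apply: le_trans (Rstar_ge t); apply: R_MAN_le_load_lb; lia.
rewrite ltr_pdivlMr ?mul1r; last by apply: MAN_gt0; lia.
by apply: lt_le_trans (Rstar_ge t); apply: R_MAN_lt_load_lb; lia.
Qed.
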